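(* Let $\alpha\in(0,1)$, $\varepsilon\in(0,1)$, a spending sequence $(\varepsilon_t)_{t\ge0}$ and the stopping boundaries $U_t,L_t$ be as in the context. If there exist constants $\lambda>0$, $q>0$ and $T\in\mathbb{N}$ such that $\varepsilon_t-\varepsilon_{t-1}\ge\lambda t^{-q}$ for all $t\ge T$, then for all $t\ge T$, $U_t\le\big\lceil t\alpha+\sqrt{t(q\log t-\log\lambda)/2}\big\rceil$ and $L_t\ge\big\lfloor t\alpha-\sqrt{t(q\log t-\log\lambda)/2}\big\rfloor$.
   Context: $\mathbb{N}=\{1,2,\dots\}$. A spending sequence is a sequence $(\varepsilon_t)_{t\ge0}$ of reals with $0\le\varepsilon_0\le\varepsilon_1\le\cdots$ and $\varepsilon_t\to\varepsilon$. For $r\in[0,1]$, $\mathbb{P}_r$ denotes a probability under which $X_1,X_2,\dots$ are i.i.d. Bernoulli$(r)$, $S_t=\sum_{j=1}^tX_j$. The stopping boundaries are defined recursively: with $\tau=\inf\{t\in\mathbb{N}:S_t\ge U_t\text{ or }S_t\le L_t\}$ ($\inf\emptyset=\infty$; the events $\{\tau\ge t\}$, $\{\tau<t,S_\tau\ge U_\tau\}$, $\{\tau<t,S_\tau\le L_\tau\}$ only involve $U_s,L_s$, $s<t$), $U_t=\min\{j\in\mathbb{N}:\mathbb{P}_\alpha(\tau\ge t,S_t\ge j)+\mathbb{P}_\alpha(\tau<t,S_\tau\ge U_\tau)\le\varepsilon_t\}$ and $L_t=\max\{j\in\mathbb{Z}:\mathbb{P}_\alpha(\tau\ge t,S_t\le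 j)+\mathbb{P}_\alpha(\tau<t,S_\tau\le L_\tau)\le\varepsilon_t\}$. *)

From HB Require Import structures.
From mathcomp Require Import all_boot all_order all_algebra.
From mathcomp Require Import all_classical all_reals all_analysis.
Set Implicit Arguments. Unset Strict Implicit. Unset Printing Implicit Defensive.
Import Order.TTheory GRing.Theory Num.Theory.
Import numFieldNormedType.Exports.
Local Open Scope classical_set_scope.
Local Open Scope ring_scope.

(* A sample path w : nat -> bool; X_k = w (k-1) for k >= 1.
   S w t = X_1 + ... + X_t, as an integer. *)
Definition Ssum (w : nat -> bool) (t : nat) : int := (\sum_(i < t) (w i : nat))%:Z.

(* Extension of a finite path by false (the tail is never inspected by the
   events below, which only involve X_1..X_t). *)
Definition ext (t : nat) (w : {ffun 'I_t -> bool}) : nat -> bool :=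
  fun k => match insub k with Some i => w i | None => false end.

(* P_r(E) for an event E depending only on X_1, ..., X_t, where X_j are
   i.i.d. Bernoulli(r): the finite-dimensional marginal of the product law. *)
Definition Pr {R : realType} (r : R) (t : nat) (E : (nat -> bool) -> bool) : R :=
  \sum_(w : {ffun 'I_t -> bool})
     (\prod_(i < t) (if w i then r else 1 - r)) * (E (ext w))%:R.

Section Stopping.
Variables (U L : nat -> int) (w : nat -> bool).

Definition hit (s : nat) : bool := (U s <= Ssum w s) || (Ssum w s <= L s).

(* tau = inf {s in N : hit s};  {tau >= t} = no hit at any s in {1, ..., t-1} *)
Definition tau_ge (t : nat) : bool := all (fun s => ~~ hit s) (iota 1 t.-1).

Definition tau_eq (s : nat) : bool := (0 < s)%N && tau_ge s && hit s.

Definition upper_before (t : nat) : bool :=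
  has (fun s => tau_eq s && (U s <= Ssum w s)) (iota 1 t.-1).

Definition lower_before (t : nat) : bool :=
  has (fun s => tau_eq s && (Ssum w s <= L s)) (iota 1 t.-1).
End Stopping.

Definition spending {R : realType} (eps : nat -> R) (epsilon : R) : Prop :=
  0 <= eps 0%N /\ (forall t, eps t <= eps t.+1) /\ eps @ \oo --> epsilon.

(* U and L are the stopping boundaries defined recursively from alpha and eps:
   for every t in N,
   U_t = min {j in N : P_a(tau >= t, S_t >= j) + P_a(tau < t, S_tau >= U_tau) <= eps_t}
   L_t = max {j in Z : P_a(tau >= t, S_t <= j) + P_a(tau < t, S_tau <= L_tau) <= eps_t}.
   (tau, built from U and L, only involves U_s, L_s for s < t in these events,
   so this characterization is exactly the recursion.) *)
Definition is_boundaries {R : realType} (alpha : R) (eps : nat -> R)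
    (U L : nat -> int) : Prop :=
  forall t : nat, (0 < t)%N ->
    let FU j := Pr alpha t (fun w => tau_ge U L w t && (j <= Ssum w t))
                + Pr alpha t (fun w => upper_before U L w t) in
    let FL j := Pr alpha t (fun w => tau_ge U L w t && (Ssum w t <= j))
                + Pr alpha t (fun w => lower_before U L w t) in
    [/\ 1 <= U t, FU (U t) <= eps t,
        (forall j : int, 1 <= j -> FU j <= eps t -> U t <= j),
        FL (L t) <= eps t &
        (forall j : int, FL j <= eps t -> j <= L t)].

From HB Require Import structures.
From mathcomp Require Import all_boot all_order all_algebra.
From mathcomp Require Import all_classical all_reals all_analysis.
From mathcomp Require Import ring.
Import Order.TTheory GRing.Theory Num.Theory.
Local Open Scope ring_scope.

(* The mass already spent is at most eps_(t-1), since it is what the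
   boundaries up to time t-1 allowed.  Hence U_t <= j as soon as the binomial
   tail P(S_t >= j) is at most eps_t - eps_(t-1), which is >= lam t^-q.
   Hoeffding's inequality P(S_t >= t alpha + r) <= exp(-2 r^2 / t) makes this
   true for r = sqrt(t (q log t - log lam) / 2); the lower boundary is
   symmetric.  Hoeffding's lemma itself is proved by differentiating twice. *)

Section HoeffdingLemma.
Context {R : realType}.

Lemma is_derive_ext {f g : R -> R} {x df dg : R} :
  (forall y, f y = g y) -> is_derive x 1 f df -> df = dg -> is_derive x 1 g dg.
Proof. by move=> /funext <- fd <-. Qed.

Lemma ger0_derive_le_at0 {f df : R -> R} {s : R} :
  (forall x : R, is_derive x 1 f (df x)) -> (forall x, 0 <= x -> 0 <= df x) ->
  0 <= s -> f 0 <= f s.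
Proof.
move=> fd df_ge0 s_ge0; apply: (@ger0_derive1_ndecr R f 0 s) => //.
- move=> x; rewrite in_itv /= => /andP[x_gt0 _].
  by rewrite derive1E; have [_ ->] := fd x; apply/df_ge0/ltW.
- by apply: derivable_within_continuous => x _; have [] := fd x.
Qed.

Variable a : R.
Hypotheses (a_ge0 : 0 <= a) (a_le1 : a <= 1).

Let D (s : R) := 1 - a + a * expR s.

Let D_gt0 s : 0 < D s.
Proof.
move: a_le1; rewrite le_eqVlt => /predU1P[a_eq1|a_lt1].
  by rewrite /D a_eq1 subrr add0r mul1r expR_gt0.
by rewrite /D ltr_wpDr ?mulr_ge0 ?expR_ge0 ?subr_gt0.
Qed.

Let D_derive (x : R) : is_derive x 1 D (a * expR x).
Proof.
by apply: (@is_derive_ext (cst (1 - a) + a \*: expR)) => //=; rewrite add0r.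
Qed.

(* [g s := a s + s^2/8 - ln (D s)] and its derivative [g'] vanish at 0, and
   [g'' = (1 - a - a e^s)^2 / (4 D(s)^2) >= 0]. *)
Let g' (s : R) := a + s / 4 - a * expR s / D s.

Let g'_derive (x : R) : is_derive x 1 g' ((1 - a - a * expR x) ^+ 2 / (4 * D x ^+ 2)).
Proof.
have Dx_neq0 : D x != 0 by rewrite gt_eqF.
have g'd := is_deriveB (is_deriveD (@is_derive_cst R R R a x 1)
  (is_deriveZ (4^-1) (@is_derive_id R R x 1)))
  (is_deriveM (is_deriveZ a (is_derive_expR x)) (is_deriveV Dx_neq0 (D_derive x))).
apply: (is_derive_ext _ g'd) => [y|]; first by rewrite /g' [_ / 4]mulrC.
rewrite /D in Dx_neq0 *; rewrite (_ : (a \*: expR) x = a * expR x) // /GRing.scale /=; field.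
by rewrite Dx_neq0.
Qed.

Let g'_ge0 s : 0 <= s -> 0 <= g' s.
Proof.
move=> s_ge0; have g'0 : g' 0 = 0.
  by rewrite /g' /D expR0 mulr1 subrK mul0r addr0 divr1 subrr.
rewrite -{1}g'0; apply: (ger0_derive_le_at0 g'_derive _ s_ge0) => x _.
by rewrite divr_ge0 ?sqr_ge0 // mulr_ge0 // sqr_ge0.
Qed.

Let g_derive (x : R) : is_derive x 1 (fun s => a * s + s ^+ 2 / 8 - ln (D s)) (g' x).
Proof.
have gd := is_deriveB (is_deriveD (is_deriveZ a (@is_derive_id R R x 1))
  (is_deriveZ (8^-1) (is_deriveX 2 (@is_derive_id R R x 1))))
  (is_derive1_comp (is_derive1_ln (D_gt0 x)) (D_derive x)).
apply: (is_derive_ext _ gd) => [y|]; first by rewrite /= exprfctE [_ / 8]mulrC.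
rewrite /g' /GRing.scale /=; field.
by rewrite gt_eqF.
Qed.

Lemma hoeffding_mgf_ge0 s : 0 <= s -> 1 - a + a * expR s <= expR (a * s + s ^+ 2 / 8).
Proof.
move=> s_ge0; have := ger0_derive_le_at0 g_derive g'_ge0 s_ge0.
rewrite /D expR0 mulr1 subrK ln1 mulr0 add0r expr0n /= mul0r subr0 subr_ge0.
rewrite -ler_expR lnK // posrE; exact: D_gt0.
Qed.

End HoeffdingLemma.

(* For [c < 0], apply the case [c >= 0] to [1 - a] and [- c]. *)
Lemma hoeffding_mgf (R : realType) (a c : R) : 0 <= a <= 1 ->
  1 - a + a * expR c <= expR (a * c + c ^+ 2 / 8).
Proof.
move=> /andP[a_ge0 a_le1]; have [c_ge0|c_lt0] := leP 0 c.
  exact: hoeffding_mgf_ge0.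
have := @hoeffding_mgf_ge0 R (1 - a) _ _ (- c).
rewrite subr_ge0 lerBlDr lerDl a_ge0 a_le1 oppr_ge0 (ltW c_lt0) => /(_ isT isT isT).
move/(ler_wpM2r (expR_ge0 c)); rewrite -expRD.
have -> : (1 - a) * - c + (- c) ^+ 2 / 8 + c = a * c + c ^+ 2 / 8 by ring.
by rewrite mulrDl -mulrA -expRD addNr expR0 mulr1 subKr addrC mulrC.
Qed.

Definition agree (n : nat) (w w' : nat -> bool) := forall k, (k < n)%N -> w k = w' k.

Definition depends_on (n : nat) (E : (nat -> bool) -> bool) :=
  forall w w', agree n w w' -> E w = E w'.

Lemma ext_ord t (v : {ffun 'I_t -> bool}) (i : 'I_t) : ext v i = v i.
Proof. by rewrite /ext valK. Qed.

Section BernoulliPaths.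
Context {R : realType} {r : R}.
Hypotheses (r_ge0 : 0 <= r) (r_le1 : r <= 1).

Let pb (b : bool) : R := if b then r else 1 - r.

Let weight_ge0 t (w : {ffun 'I_t -> bool}) : 0 <= \prod_(i < t) pb (w i).
Proof. by apply: prodr_ge0 => i _; rewrite /pb; case: (w i); rewrite ?subr_ge0. Qed.

Lemma le_Pr t (E F : (nat -> bool) -> bool) :
  (forall w, E w -> F w) -> Pr r t E <= Pr r t F.
Proof.
move=> EF; apply: ler_sum => w _; apply: ler_wpM2l; first exact: weight_ge0.
by case: (boolP (E _)) => [/EF -> //|_]; case: (F _).
Qed.

Lemma Pr_or_le t (E F : (nat -> bool) -> bool) :
  Pr r t (fun w => E w || F w) <= Pr r t E + Pr r t F.
Proof.
rewrite /Pr -big_split /=; apply: ler_sum => w _.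
rewrite -mulrDr; apply: ler_wpM2l; first exact: weight_ge0.
by case: (E _); case: (F _); rewrite /= ?addr0 ?add0r ?lerDl.
Qed.

Lemma Pr_pred0 t : Pr r t (fun _ => false) = 0.
Proof. by rewrite /Pr big1 // => w _; rewrite mulr0. Qed.

Lemma Pr_depends_on t E : depends_on t E -> Pr r t.+1 E = Pr r t E.
Proof.
move=> dE; pose h (p : {ffun 'I_t -> bool} * bool) : {ffun 'I_t.+1 -> bool} :=
  [ffun i : 'I_t.+1 => if (val i < t)%N then ext p.1 i else p.2].
pose hi (w : {ffun 'I_t.+1 -> bool}) : {ffun 'I_t -> bool} * bool :=
  ([ffun j : 'I_t => w (widen_ord (leqnSn t) j)], w ord_max).
have hK : cancel h hi.
  case=> v b; rewrite /h /hi /=; congr pair; last by rewrite ffunE /= ltnn.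
  by apply/ffunP => j; rewrite !ffunE /= ltn_ord ext_ord.
have hiK : cancel hi h.
  move=> w; apply/ffunP => i; rewrite ffunE /=; case: ltnP => [i_lt|i_ge].
    by rewrite /ext insubT ffunE; apply: congr1; apply: val_inj.
  by apply: congr1; apply/val_inj/eqP; rewrite /= eqn_leq i_ge -ltnS ltn_ord.
rewrite /Pr (reindex h); last by exists hi => ? _; [exact: hK | exact: hiK].
rewrite -(pair_big xpredT xpredT (fun v b =>
  (\prod_(i < t.+1) pb (h (v, b) i)) * (E (ext (h (v, b))))%:R)) /=.
apply: eq_bigr => v _; rewrite big_bool /=.
have hE b : E (ext (h (v, b))) = E (ext v).
  apply: dE => k k_lt; have k_lt1 : (k < t.+1)%N := ltnW k_lt.
  by rewrite /ext insubT ffunE /= k_lt.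
have hP b : \prod_(i < t.+1) pb (h (v, b) i) = (\prod_(i < t) pb (v i)) * pb b.
  rewrite big_ord_recr /= ffunE /= ltnn; congr (_ * _).
  by apply: eq_bigr => i _; rewrite ffunE /= ltn_ord ext_ord.
by rewrite !hE !hP /pb; ring.
Qed.

Lemma bernoulli_sum_mgf t (c : R) :
  \sum_(w : {ffun 'I_t -> bool}) (\prod_(i < t) pb (w i)) * expR (c * (Ssum (ext w) t)%:~R)
  = (1 - r + r * expR c) ^+ t.
Proof.
pose F (i : 'I_t) (b : bool) := pb b * expR (c * (b : nat)%:R).
transitivity (\sum_(w : {ffun 'I_t -> bool}) \prod_(i < t) F i (w i)).
  apply: eq_bigr => w _; rewrite /Ssum -pmulrn natr_sum mulr_sumr.
  rewrite (big_morph expR (@expRD R) (@expR0 R)) -big_split /=.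
  by apply: eq_bigr => i _; rewrite ext_ord.
rewrite -bigA_distr_bigA /=.
under eq_bigr => i _ do rewrite big_bool /F /= mulr1 mulr0 expR0 mulr1 addrC.
by rewrite prodr_const card_ord.
Qed.

Lemma Pr_chernoff {t} {E : (nat -> bool) -> bool} {c j : R} :
  (forall w, E w -> c * j <= c * (Ssum w t)%:~R) ->
  Pr r t E <= expR (- (c * j)) * (1 - r + r * expR c) ^+ t.
Proof.
move=> cE; rewrite -bernoulli_sum_mgf mulr_sumr; apply: ler_sum => w _.
rewrite mulrCA; apply: ler_wpM2l; first exact: weight_ge0.
rewrite -expRD; case: (boolP (E _)) => [/cE cjS|_]; last exact: expR_ge0.
by apply: le_trans (expR_ge1Dx _); rewrite lerDl addrC subr_ge0.
Qed.

End BernoulliPaths.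

Section HoeffdingTails.
Context {R : realType} {a : R}.
Hypotheses (a_ge0 : 0 <= a) (a_le1 : a <= 1).

Lemma Pr_hoeffding {t} {E : (nat -> bool) -> bool} {c j : R} :
  (forall w, E w -> c * j <= c * (Ssum w t)%:~R) ->
  Pr a t E <= expR (t%:R * (a * c + c ^+ 2 / 8) - c * j).
Proof.
move=> cE; apply: le_trans (Pr_chernoff a_ge0 a_le1 cE) _.
rewrite expRD expRM_natl [leRHS]mulrC; apply: ler_wpM2l; first exact: expR_ge0.
apply: lerXn2r; rewrite ?nnegrE ?expR_ge0 ?hoeffding_mgf ?a_ge0 //.
by rewrite addr_ge0 ?mulr_ge0 ?expR_ge0 ?subr_ge0.
Qed.

(* Both tails come from the Chernoff bound with [c = +- 4d/t]. *)
Lemma Pr_upper_tail t (j : int) (d : R) : (0 < t)%N -> 0 <= d ->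
  t%:R * a + d <= j%:~R -> Pr a t (fun w => j <= Ssum w t) <= expR (- (2 * d ^+ 2 / t%:R)).
Proof.
move=> t_gt0 d_ge0 dj; have t_gt0' : 0 < t%:R :> R by rewrite ltr0n.
have c_ge0 : 0 <= 4 * d / t%:R by rewrite divr_ge0 ?mulr_ge0 // ltW.
apply: le_trans (@Pr_hoeffding t _ (4 * d / t%:R) j%:~R _) _.
  by move=> w jS; rewrite ler_wpM2l // ler_int.
rewrite ler_expR; apply: le_trans (lerB (lexx _) (ler_wpM2l c_ge0 dj)) _.
by rewrite [leLHS](_ : _ = - (2 * d ^+ 2 / t%:R)) //; field; rewrite gt_eqF.
Qed.

Lemma Pr_lower_tail t (j : int) (d : R) : (0 < t)%N -> 0 <= d ->
  j%:~R <= t%:R * a - d -> Pr a t (fun w => Ssum w t <= j) <= expR (- (2 * d ^+ 2 / t%:R)).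
Proof.
move=> t_gt0 d_ge0 dj; have t_gt0' : 0 < t%:R :> R by rewrite ltr0n.
have c_ge0 : 0 <= 4 * d / t%:R by rewrite divr_ge0 ?mulr_ge0 // ltW.
apply: le_trans (@Pr_hoeffding t _ (- (4 * d / t%:R)) j%:~R _) _.
  by move=> w Sj; rewrite !mulNr lerN2 ler_wpM2l // ler_int.
rewrite ler_expR mulNr opprK; apply: le_trans (lerD (lexx _) (ler_wpM2l c_ge0 dj)) _.
by rewrite [leLHS](_ : _ = - (2 * d ^+ 2 / t%:R)) //; field; rewrite gt_eqF.
Qed.

End HoeffdingTails.

Lemma Ssum_agree {n w w' s} : agree n w w' -> (s <= n)%N -> Ssum w s = Ssum w' s.
Proof.
move=> ww' s_le; rewrite /Ssum; congr Posz; apply: eq_bigr => i _.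
by rewrite ww' // (leq_trans (ltn_ord i) s_le).
Qed.

Lemma mem_iota_predn_le s t n : s \in iota 1 t.-1 -> (t <= n.+1)%N -> (s <= n)%N.
Proof.
case: t => [|t] //; rewrite mem_iota add1n => /andP[_ s_lt] t_le.
by rewrite -ltnS (leq_trans s_lt t_le).
Qed.

Section StoppingEvents.
Variables (U L : nat -> int).

(* The event {tau < t, c_tau(S_tau)}; [upper_before] and [lower_before] are
   the instances [c s x := U s <= x] and [c s x := x <= L s]. *)
Definition stopped_before (c : nat -> int -> bool) (w : nat -> bool) (t : nat) :=
  has (fun s => tau_eq U L w s && c s (Ssum w s)) (iota 1 t.-1).

Lemma tau_ge_agree {n w w' t} : agree n w w' -> (t <= n.+1)%N ->
  tau_ge U L w t = tau_ge U L w' t.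
Proof.
move=> ww' t_le; apply: eq_in_all => s /mem_iota_predn_le /(_ t_le) s_le.
by rewrite /hit (Ssum_agree ww' s_le).
Qed.

Lemma stopped_before_agree c {n w w' t} : agree n w w' -> (t <= n.+1)%N ->
  stopped_before c w t = stopped_before c w' t.
Proof.
move=> ww' t_le; apply: eq_in_has => s /mem_iota_predn_le /(_ t_le) s_le.
by rewrite /tau_eq /hit (tau_ge_agree ww' (leqW s_le)) (Ssum_agree ww' s_le).
Qed.

Lemma stopped_before_step (c : nat -> int -> bool) w m :
  (forall s x, c s x -> (U s <= x) || (x <= L s)) ->
  stopped_before c w m.+2 =
  stopped_before c w m.+1 || tau_ge U L w m.+1 && c m.+1 (Ssum w m.+1).
Proof.
move=> c_hit; have iotaS : iota 1 m.+1 = iota 1 m ++ [:: m.+1].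
  by rewrite -{1}[m.+1]addn1 iotaD add1n.
rewrite /stopped_before [iota 1 _]iotaS has_cat /= orbF.
congr orb; rewrite /tau_eq /=.
by case c_m: (c _ _); rewrite ?andbT ?andbF // /hit (c_hit _ _ c_m) andbT.
Qed.

Context {R : realType} {a : R} {eps : nat -> R}.
Hypotheses (a_ge0 : 0 <= a) (a_le1 : a <= 1) (eps0_ge0 : 0 <= eps 0%N).

(* Stopping before [t+1] is stopping before [t] or exactly at [t]; the mass of
   the latter, together with that of the former, is what the boundary at
   time [t] keeps within [eps t]. *)
Lemma Pr_stopped_before (c : nat -> int -> bool) t :
  (forall s x, c s x -> (U s <= x) || (x <= L s)) ->
  (forall m, Pr a m.+1 (fun w => tau_ge U L w m.+1 && c m.+1 (Ssum w m.+1))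
             + Pr a m.+1 (fun w => stopped_before c w m.+1) <= eps m.+1) ->
  (0 < t)%N -> Pr a t (fun w => stopped_before c w t) <= eps t.-1.
Proof.
move=> c_hit c_spent; case: t => [|[|m]] // _.
  by rewrite (_ : (fun w => _) = fun _ => false) ?Pr_pred0 //; apply: funext.
rewrite (funext (fun w => stopped_before_step c w m c_hit)).
apply: le_trans (Pr_or_le a_ge0 a_le1 _ _ _) _.
rewrite addrC !(Pr_depends_on m.+1) // => w w' ww'.
  by apply: (stopped_before_agree _ ww').
by rewrite (tau_ge_agree ww') ?(Ssum_agree ww').
Qed.

Hypothesis bounds : is_boundaries a eps U L.

Lemma Pr_upper_before t : (0 < t)%N ->
  Pr a t (fun w => upper_before U L w t) <= eps t.-1.
Proof.
apply: (Pr_stopped_before (fun s x => U s <= x)) => [s x ->//|m].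
by have [] := bounds m.+1 isT.
Qed.

Lemma Pr_lower_before t : (0 < t)%N ->
  Pr a t (fun w => lower_before U L w t) <= eps t.-1.
Proof.
apply: (Pr_stopped_before (fun s x => x <= L s)) => [s x ->|m]; first exact: orbT.
by have [] := bounds m.+1 isT.
Qed.

Lemma boundary_upper_le t (j : int) : (0 < t)%N -> 1 <= j ->
  Pr a t (fun w => j <= Ssum w t) <= eps t - eps t.-1 -> U t <= j.
Proof.
move=> t_gt0 j_ge1 tail; have [_ _ U_min _ _] := bounds t t_gt0.
apply: U_min => //; rewrite -(subrK (eps t.-1) (eps t)).
apply: lerD (le_trans _ tail) (Pr_upper_before t t_gt0).
by apply: le_Pr => // w /andP[].
Qed.

Lemma boundary_lower_ge t (j : int) : (0 < t)%N ->
  Pr a t (fun w => Ssum w t <= j) <= eps t - eps t.-1 -> j <= L t.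
Proof.
move=> t_gt0 tail; have [_ _ _ _ L_max] := bounds t t_gt0.
apply: L_max; rewrite -(subrK (eps t.-1) (eps t)).
apply: lerD (le_trans _ tail) (Pr_lower_before t t_gt0).
by apply: le_Pr => // w /andP[].
Qed.

End StoppingEvents.

Lemma expR_hoeffding_radius {R : realType} {t : nat} {lam : R} (q : R) :
  (0 < t)%N -> 0 < lam ->
  expR (- (2 * Num.sqrt (t%:R * (q * ln t%:R - ln lam) / 2) ^+ 2 / t%:R))
    <= lam * t%:R `^ (- q).
Proof.
move=> t_gt0 lam_gt0; have t_gt0' : 0 < t%:R :> R by rewrite ltr0n.
set X := q * ln t%:R - ln lam.
have -> : lam * t%:R `^ (- q) = expR (- X).
  by rewrite /powR gt_eqF // -[lam in lam * _]lnK ?posrE // -expRD /X; congr expR; ring.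
rewrite ler_expR lerN2; have [tX_ge0|tX_lt0] := leP 0 (t%:R * X / 2).
  by rewrite sqr_sqrtr // [leRHS](_ : _ = X) //; field; rewrite gt_eqF.
apply: (@le_trans _ _ 0); last by rewrite divr_ge0 ?mulr_ge0 ?sqr_ge0 ?ler0n.
by move: tX_lt0; rewrite mulrAC pmulr_rlt0 ?divr_gt0 // => /ltW.
Qed.

Theorem lemma2 (R : realType) (alpha epsilon : R) (eps : nat -> R)
    (U L : nat -> int) (lam q : R) (T : nat) :
  0 < alpha < 1 -> 0 < epsilon < 1 ->
  spending eps epsilon ->
  is_boundaries alpha eps U L ->
  0 < lam -> 0 < q -> (1 <= T)%N ->
  (forall t : nat, (T <= t)%N -> lam * (t%:R `^ (- q)) <= eps t - eps t.-1) ->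
  forall t : nat, (T <= t)%N ->
    U t <= Num.ceil (t%:R * alpha
                     + Num.sqrt (t%:R * (q * ln t%:R - ln lam) / 2)) /\
    Num.floor (t%:R * alpha
               - Num.sqrt (t%:R * (q * ln t%:R - ln lam) / 2)) <= L t.
Proof.
move=> /andP[a_gt0 a_lt1] _ [eps0_ge0 _] bounds lam_gt0 _ T_ge1 increment t T_le_t.
have t_gt0 : (0 < t)%N := leq_trans T_ge1 T_le_t.
have [a_ge0 a_le1] := (ltW a_gt0, ltW a_lt1).
set r := Num.sqrt _.
have tail_le : expR (- (2 * r ^+ 2 / t%:R)) <= eps t - eps t.-1.
  exact: le_trans (expR_hoeffding_radius q t_gt0 lam_gt0) (increment t T_le_t).
split.
- apply: (boundary_upper_le _ _ a_ge0 a_le1 eps0_ge0 bounds _ _ t_gt0).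
    by rewrite -gtz0_ge1 ceil_gt0 ltr_wpDr ?sqrtr_ge0 // mulr_gt0 ?ltr0n.
  by apply: le_trans tail_le; apply: Pr_upper_tail; rewrite ?sqrtr_ge0 ?ceil_ge.
- apply: (boundary_lower_ge _ _ a_ge0 a_le1 eps0_ge0 bounds _ _ t_gt0).
  by apply: le_trans tail_le; apply: Pr_lower_tail; rewrite ?sqrtr_ge0 ?floor_le.
Qed.
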